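(* Let $\star\in\{\boxtimes,\circ,\times\}$, $k$ a positive integer, and $G,H$ graphs. Then $m_k(G\star H)$ is $\ast$-well-behaved w.r.t. $G$ and $H$ if and only if there exist positive integers $k_G,k_H$ with $k_Gk_H=k$ such that $m_k(G\star H)=2\,m_{k_G}(G)\,m_{k_H}(H)$.
   Context: Graphs are finite, simple, undirected, with non-empty vertex set. For a positive integer $k$, a $k$-matching of $G=(V,E)$ is a set $M\subseteq E$ such that every vertex is incident to either $0$ or exactly $k$ edges of $M$ (the empty set is one); $m_k(G)$ is the maximum size of a $k$-matching of $G$. Products on $V_G\times V_H$: in $G\boxtimes H$, $(g,h)\sim(g',h')$ iff (i) $\{g,g'\}\in E_G$, $h=h'$; or (ii) $g=g'$, $\{h,h'\}\in E_H$; or (iii) $\{g,g'\}\in E_G$ and $\{h,h'\}\in E_H$; in $G\times H$ iff (iii); in $G\circ H$ iff $\{g,g'\}\in E_G$ or (ii). For $M_G\subseteq E_G$, $M_H\subseteq E_H$ define $F_{\ast}(M_G,M_H)=\{\{(g,h),(g',h')\}:\{g,g'\}\in M_G,\{h,h'\}\in M_H\}$. $m_k(G\star H)$ is $\ast$-well-behaved w.r.t. $G$ and $H$ if $m_k(G\star H)=|F_{\ast}(M_G,M_H)|$ for some $M_G\subseteq E_G$, $M_H\subseteq E_H$ for which $F_{\ast}(M_G,M_H)$ is a $k$-matching of $G\star H$. *)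

(* Graphs: finite type of vertices with a symmetric,
   irreflexive adjacency relation; edges are 2-element vertex sets. *)
From mathcomp Require Import all_boot.
Set Implicit Arguments. Unset Strict Implicit. Unset Printing Implicit Defensive.

Section Defs.
Variable T : finType.

Definition edges (e : rel T) : {set {set T}} :=
  [set E : {set T} | [exists x, exists y, e x y && (E == [set x; y])]].

Definition kmatching (e : rel T) (k : nat) (M : {set {set T}}) : bool :=
  (M \subset edges e) &&
  [forall v : T, (#|[set E in M | v \in E]| == 0) || (#|[set E in M | v \in E]| == k)].

Definition mk (k : nat) (e : rel T) : nat :=
  \max_(M : {set {set T}} | kmatching e k M) #|M|.
End Defs.

Inductive gprod := Strong | Lexico | Tensor.

Definition prod_rel (p : gprod) (T1 T2 : finType) (e1 : rel T1) (e2 : rel T2)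
  : rel (T1 * T2) :=
  fun x y =>
    match p with
    | Strong => [|| e1 x.1 y.1 && (x.2 == y.2),
                    (x.1 == y.1) && e2 x.2 y.2 |
                    e1 x.1 y.1 && e2 x.2 y.2]
    | Lexico => e1 x.1 y.1 || ((x.1 == y.1) && e2 x.2 y.2)
    | Tensor => e1 x.1 y.1 && e2 x.2 y.2
    end.

Definition Fset (T1 T2 : finType) (MG : {set {set T1}}) (MH : {set {set T2}})
  : {set {set (T1 * T2)}} :=
  [set E : {set (T1 * T2)} | [exists g, exists g', exists h, exists h',
     [&& [set g; g'] \in MG, [set h; h'] \in MH & E == [set (g, h); (g', h')]]]].

Definition well_behaved (p : gprod) (k : nat) (T1 T2 : finType)
  (e1 : rel T1) (e2 : rel T2) : Prop :=
  exists (MG : {set {set T1}}) (MH : {set {set T2}}),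
    [/\ MG \subset edges e1, MH \subset edges e2,
        kmatching (prod_rel p e1 e2) k (Fset MG MH) &
        mk k (prod_rel p e1 e2) = #|Fset MG MH| ].

From mathcomp Require Import all_boot.
Set Implicit Arguments. Unset Strict Implicit.

(* For sets of edges M_G, M_H the set F = F(M_G, M_H) consists of
   the pairs {(g,h),(g',h')} with {g,g'} in M_G and {h,h'} in M_H, so the
   F-neighbours of (g,h) are exactly N_{M_G}(g) x N_{M_H}(h).  Hence
   (1) deg_F (g,h) = deg_{M_G} g * deg_{M_H} h, and
   (2) |F| = 2 |M_G| |M_H| by double counting (handshake lemma).
   Every pair in F is an edge of G * H for each of the three products, so by
   (1) F(M_G, M_H) is a (k_G k_H)-matching whenever M_G, M_H are k_G- and
   k_H-matchings; with (2) this gives 2 m_{k_G}(G) m_{k_H}(H) <= m_k(G * H)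
   whenever k_G k_H = k.  Conversely, if F(M_G, M_H) is a nonempty k-matching,
   the degrees k_G, k_H of the two ends of one of its edges are positive, and
   (1) forces M_G and M_H to be a k_G- and a k_H-matching with k_G k_H = k. *)

Lemma set2_inj (T : finType) (x y u v : T) :
  [set x; y] = [set u; v] -> (x = u /\ y = v) \/ (x = v /\ y = u).
Proof.
move=> Exy.
have /set2P xuv : x \in [set u; v] by rewrite -Exy set21.
have /set2P yuv : y \in [set u; v] by rewrite -Exy set22.
have /set2P uxy : u \in [set x; y] by rewrite Exy set21.
have /set2P vxy : v \in [set x; y] by rewrite Exy set22.
by case: xuv yuv uxy vxy => -> [] ? [] ? [] ?; subst; auto.
Qed.

Section TwoUniform.
Variable T : finType.

Definition two_uniform (M : {set {set T}}) : Prop :=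
  forall E, E \in M -> #|E| = 2.

Definition deg (M : {set {set T}}) (v : T) : nat := #|[set E in M | v \in E]|.

Definition nbr (M : {set {set T}}) (v : T) : {set T} := [set w | [set v; w] \in M].

Lemma kmatchingE (e : rel T) k (M : {set {set T}}) :
  kmatching e k M = (M \subset edges e) && [forall v, (deg M v == 0) || (deg M v == k)].
Proof. by []. Qed.

Lemma edges_two_uniform (e : rel T) (M : {set {set T}}) :
  irreflexive e -> M \subset edges e -> two_uniform M.
Proof.
move=> irr /subsetP sM E /sM; rewrite inE => /existsP[x /existsP[y /andP[exy /eqP->]]].
by rewrite cards2; case: eqP exy => // ->; rewrite irr.
Qed.

Lemma edge_rel (e : rel T) a b :
  symmetric e -> [set a; b] \in edges e -> e a b.
Proof.
move=> sym; rewrite inE => /existsP[x /existsP[y /andP[exy /eqP Eab]]].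
by case: (set2_inj Eab) => -[-> ->]; rewrite // sym.
Qed.

Lemma deg_nbr (M : {set {set T}}) v : two_uniform M -> deg M v = #|nbr M v|.
Proof.
move=> uM.
have inj : {in nbr M v &, injective (fun w => [set v; w])}.
  by move=> w1 w2 _ _ /set2_inj [[_ ->] | [<- <-]].
rewrite /deg -(card_in_imset inj); apply: eq_card => E; rewrite inE.
apply/andP/imsetP => [[EM vE] | [w]]; last by rewrite inE => wM ->; rewrite set21.
have /cards2P [x [y [_ Exy]]] : #|E| == 2 by rewrite uM.
move: EM vE; rewrite Exy => EM /set2P [vx | vy]; subst v.
- by exists y; rewrite ?inE.
- by exists x; rewrite ?inE setUC.
Qed.

Lemma handshake (M : {set {set T}}) : two_uniform M -> \sum_v deg M v = 2 * #|M|.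
Proof.
move=> uM.
transitivity (\sum_v \sum_(E in M) ((v \in E) : nat)).
  apply: eq_bigr => v _; rewrite /deg -sum1_card big_mkcond [RHS]big_mkcond /=.
  by apply: eq_bigr => E _; rewrite !inE; case: (E \in M); case: (v \in E).
rewrite exchange_big /= (eq_bigr (fun=> 2)) => [|E EM].
  by rewrite sum_nat_const mulnC.
rewrite -(uM _ EM) -sum1_card [RHS]big_mkcond /=.
by apply: eq_bigr => v _; case: (v \in E).
Qed.

(* The maximum m_k is realised by some k-matching (the empty set is one). *)
Lemma mk_attained (e : rel T) k : exists2 M, kmatching e k M & mk k e = #|M|.
Proof.
have k0 : kmatching e k set0.
  rewrite kmatchingE sub0set; apply/forallP => v.
  rewrite /deg (_ : [set E in (set0 : {set {set T}}) | v \in E] = set0) ?cards0 //.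
  by apply/setP => E; rewrite !inE.
have [|M kM mkM] := @eq_bigmax_cond _ (kmatching e k) (fun M => #|M|).
  by apply/card_gt0P; exists set0.
by exists M; rewrite // /mk mkM.
Qed.

Lemma mk_ge (e : rel T) k (M : {set {set T}}) : kmatching e k M -> #|M| <= mk k e.
Proof. by move=> kM; rewrite /mk (bigD1 M) //= leq_maxl. Qed.

End TwoUniform.

Section ProductEdges.
Variables T1 T2 : finType.
Variables (MG : {set {set T1}}) (MH : {set {set T2}}).

(* A doubleton lies in F(M_G, M_H) exactly when its projections are edges of
   M_G and M_H; no hypothesis is needed since doubletons determine their pairs. *)
Lemma Fset_mem g g' h h' :
  ([set (g, h); (g', h')] \in Fset MG MH) = ([set g; g'] \in MG) && ([set h; h'] \in MH).
Proof.
apply/idP/andP => [|[mG mH]]; last first.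
  by rewrite inE; apply/existsP; exists g; apply/existsP; exists g';
    apply/existsP; exists h; apply/existsP; exists h'; rewrite mG mH eqxx.
rewrite inE => /existsP[a /existsP[a' /existsP[b /existsP[b' /and3P[mG mH /eqP E]]]]].
case: (set2_inj E) => -[[-> ->] [-> ->]]; first by rewrite mG mH.
by rewrite setUC mG setUC mH.
Qed.

Hypotheses (uG : two_uniform MG) (uH : two_uniform MH).

Lemma Fset_two_uniform : two_uniform (Fset MG MH).
Proof.
move=> E; rewrite inE => /existsP[g /existsP[g' /existsP[h /existsP[h' /and3P[mG _ /eqP->]]]]].
by move: (uG mG); rewrite !cards2 xpair_eqE; case: (g == g').
Qed.

(* (1): the neighbourhood of (g,h) in F is the product of the neighbourhoods. *)
Lemma deg_Fset g h : deg (Fset MG MH) (g, h) = deg MG g * deg MH h.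
Proof.
rewrite !deg_nbr //; last exact: Fset_two_uniform.
rewrite -cardsX; apply: eq_card => -[g' h'].
by rewrite [_ \in nbr _ _]inE Fset_mem in_setX !inE.
Qed.

(* (2): |F(M_G, M_H)| = 2 |M_G| |M_H|, by summing (1) over all vertices. *)
Lemma card_Fset : #|Fset MG MH| = 2 * #|MG| * #|MH|.
Proof.
have := handshake Fset_two_uniform.
rewrite (eq_bigr (fun v => deg MG v.1 * deg MH v.2)) => [|[g h] _]; last exact: deg_Fset.
rewrite -(pair_bigA _ (fun g h => deg MG g * deg MH h)) /=.
under eq_bigr do rewrite -big_distrr /=.
rewrite -big_distrl /= !handshake // -!mulnA => /eqP.
by rewrite eqn_pmul2l // => /eqP <-; rewrite mulnCA mulnA.
Qed.

End ProductEdges.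

Section Products.
Variables (p : gprod) (T1 T2 : finType) (e1 : rel T1) (e2 : rel T2).
Hypotheses (s1 : symmetric e1) (i1 : irreflexive e1).
Hypotheses (s2 : symmetric e2) (i2 : irreflexive e2).

Lemma Fset_sub_edges (MG : {set {set T1}}) (MH : {set {set T2}}) :
  MG \subset edges e1 -> MH \subset edges e2 ->
  Fset MG MH \subset edges (prod_rel p e1 e2).
Proof.
move=> /subsetP sG /subsetP sH; apply/subsetP => E.
rewrite inE => /existsP[g /existsP[g' /existsP[h /existsP[h' /and3P[mG mH /eqP->]]]]].
rewrite inE; apply/existsP; exists (g, h); apply/existsP; exists (g', h'); rewrite eqxx andbT.
have eg := edge_rel s1 (sG _ mG); have eh := edge_rel s2 (sH _ mH).
by case: p; rewrite /= eg eh ?orbT.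
Qed.

(* By (1), degrees multiply: F of a kG- and a kH-matching is a (kG kH)-matching. *)
Lemma Fset_kmatching kG kH (MG : {set {set T1}}) (MH : {set {set T2}}) :
  kmatching e1 kG MG -> kmatching e2 kH MH ->
  kmatching (prod_rel p e1 e2) (kG * kH) (Fset MG MH).
Proof.
rewrite !kmatchingE => /andP[sG dG] /andP[sH dH].
have uG := edges_two_uniform i1 sG; have uH := edges_two_uniform i2 sH.
rewrite Fset_sub_edges //; apply/forallP => -[g h]; rewrite deg_Fset //.
by case/orP: (forallP dG g) => /eqP->; case/orP: (forallP dH h) => /eqP->;
  rewrite ?muln0 ?mul0n eqxx ?orbT.
Qed.

Lemma mk_prod_ge kG kH :
  2 * mk kG e1 * mk kH e2 <= mk (kG * kH) (prod_rel p e1 e2).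
Proof.
have [MG kMG ->] := mk_attained e1 kG; have [MH kMH ->] := mk_attained e2 kH.
have uG := edges_two_uniform i1 (proj1 (andP kMG)).
have uH := edges_two_uniform i2 (proj1 (andP kMH)).
by rewrite -(card_Fset uG uH) mk_ge ?Fset_kmatching.
Qed.

(* A nonempty k-matching F(M_G, M_H) splits as a k_G-matching times a
   k_H-matching, k_G and k_H being the degrees of the ends of one of its edges. *)
Lemma Fset_split k (MG : {set {set T1}}) (MH : {set {set T2}}) :
  MG \subset edges e1 -> MH \subset edges e2 ->
  kmatching (prod_rel p e1 e2) k (Fset MG MH) -> 0 < #|Fset MG MH| ->
  exists kG kH, [/\ 0 < kG, 0 < kH, kG * kH = k, kmatching e1 kG MG & kmatching e2 kH MH].
Proof.
move=> sG sH /andP[_ dF] /card_gt0P[E].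
have uG := edges_two_uniform i1 sG; have uH := edges_two_uniform i2 sH.
rewrite inE => /existsP[g /existsP[g' /existsP[h /existsP[h' /and3P[mG mH _]]]]].
have kG_gt0 : 0 < deg MG g by apply/card_gt0P; exists [set g; g']; rewrite !inE mG eqxx.
have kH_gt0 : 0 < deg MH h by apply/card_gt0P; exists [set h; h']; rewrite !inE mH eqxx.
have degF v : (deg (Fset MG MH) v == 0) || (deg (Fset MG MH) v == k) := forallP dF v.
have kGkH : deg MG g * deg MH h = k.
  apply/eqP; move: (degF (g, h)); rewrite deg_Fset // muln_eq0.
  by rewrite -!leqn0 leqNgt kG_gt0 leqNgt kH_gt0.
exists (deg MG g), (deg MH h); split; rewrite // kmatchingE ?sG ?sH; apply/forallP.
- move=> x; move: (degF (x, h)); rewrite deg_Fset // -kGkH.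
  by rewrite muln_eq0 (gtn_eqF kH_gt0) orbF eqn_pmul2r.
- move=> y; move: (degF (g, y)); rewrite deg_Fset // -kGkH.
  by rewrite muln_eq0 (gtn_eqF kG_gt0) eqn_pmul2l.
Qed.

End Products.

Unset Implicit Arguments. Set Strict Implicit.

Theorem mainTheorem13 (p : gprod) (k : nat) (T1 T2 : finType)
  (e1 : rel T1) (e2 : rel T2) :
  symmetric e1 -> irreflexive e1 -> 0 < #|T1| ->
  symmetric e2 -> irreflexive e2 -> 0 < #|T2| ->
  0 < k ->
  well_behaved p k e1 e2 <->
  exists kG kH : nat, [/\ 0 < kG, 0 < kH, kG * kH = k &
    mk k (prod_rel p e1 e2) = 2 * mk kG e1 * mk kH e2].
Proof.
move=> s1 i1 _ s2 i2 _ k_gt0.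
have lb kG kH : 2 * mk kG e1 * mk kH e2 <= mk (kG * kH) (prod_rel p e1 e2).
  exact: mk_prod_ge.
split.
- case=> MG [MH [sG sH kF mkF]].
  have [F0 | F_gt0] := posnP #|Fset MG MH|.
    (* m_k(G * H) = 0, so the factorisation k = k * 1 works. *)
    exists k, 1; split=> //; first exact: muln1.
    by have := lb k 1; rewrite muln1 mkF F0 leqn0 => /eqP->.
  have [kG [kH [kG_gt0 kH_gt0 kGkH kMG kMH]]] := Fset_split i1 i2 sG sH kF F_gt0.
  subst k.
  exists kG, kH; split=> //; apply/eqP; rewrite eqn_leq lb andbT mkF.
  have uG := edges_two_uniform i1 sG; have uH := edges_two_uniform i2 sH.
  by rewrite (card_Fset uG uH) !leq_mul ?mk_ge.
- case=> kG [kH [_ _ <- mkE]].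
  have [MG kMG mkG] := mk_attained e1 kG; have [MH kMH mkH] := mk_attained e2 kH.
  have [sG sH] := (proj1 (andP kMG), proj1 (andP kMH)).
  have uG := edges_two_uniform i1 sG; have uH := edges_two_uniform i2 sH.
  exists MG, MH; split=> //; first exact: Fset_kmatching.
  by rewrite mkE mkG mkH (card_Fset uG uH).
Qed.
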